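(* Let $S$ be a finite set, let $\sigma,\pi\in\mathrm{Perm}(S)$, and let $\tau\in\mathrm{Cyc}(\pi)$ be a transposition. Let $S'=S\setminus\mathrm{supp}(\tau)$ and $\pi'=\pi|_{S'}$. Then $g(\sigma,\pi)-g(\sigma\setminus\tau,\pi')=1$ if $\tau$ is a $\sigma$-bridge, and $g(\sigma,\pi)-g(\sigma\setminus\tau,\pi')=0$ otherwise.
   Context: $\mathrm{Perm}(S)$ denotes permutations of $S$, $\mathrm{supp}(\sigma)=\{k:\sigma(k)\ne k\}$, and $\mathrm{Cyc}(\sigma)$ is the set of cycles of $\sigma$ including fixed points as trivial cycles ($\#\mathrm{Cyc}$ counts them all). $\pi|_{S'}$ is the restriction of $\pi$ to the union $S'$ of its cycles. A $\sigma$-bridge is a transposition swapping two elements in different cycles of $\sigma$ (fixed points count as cycles). $\sigma\setminus\tau\in\mathrm{Perm}(S\setminus\mathrm{supp}(\tau))$ is $(\sigma\setminus\tau)(k)=(\tau\sigma)^{r(k)}(k)$ with $r(k)\ge1$ minimal such that $(\tau\sigma)^{r(k)}(k)\notin\mathrm{supp}(\tau)$. $\pi\bowtie\sigma\in\mathrm{Perm}(\{0,1\}\times S)$ is $(0,k)\mapsto(1,\sigma(k))$, $(1,k)\mapsto(0,\pi(k))$. The genus is defined by $2g(\sigma,\pi)=\#S+\#\mathrm{Cyc}(\sigma)-\#\mathrm{Cyc}(\pi)-\#\mathrm{Cyc}(\pi\bowtie\sigma)$. *)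

From mathcomp Require Import all_boot all_order all_fingroup all_algebra.
Set Implicit Arguments. Unset Strict Implicit. Unset Printing Implicit Defensive.
Import GRing.Theory Num.Theory.

Definition cyc_of (U : finType) (f : U -> U) (A : {set U}) (x : U) : {set U} :=
  [set y in A | fconnect f x y].

(* #Cyc(f) for a permutation f of A (fixed points counted as trivial cycles) *)
Definition ncyc (U : finType) (f : U -> U) (A : {set U}) : nat :=
  #|[set cyc_of f A x | x in A]|.

Section Genus.
Variable T : finType.

Definition supp (s : {perm T}) : {set T} := [set x | s x != x].

Definition restr (f : T -> T) (A : {set T}) (x : T) : T :=
  if x \in A then f x else x.

(* sigma \ tau : k |-> (tau sigma)^{r(k)} k, r(k) >= 1 minimal with the result
   outside supp(tau).  Here (sigma * tau)%g x = tau (sigma x) is the function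
   "tau sigma".  A return time r(k) <= #|T| always exists.  Points of supp(tau)
   are sent to themselves (they are outside the domain). *)
Definition minus (sigma tau : {perm T}) (k : T) : T :=
  let f := (sigma * tau)%g in
  if k \in supp tau then k else
  let r := head 0%N [seq r <- iota 1 #|T| | (f ^+ r)%g k \notin supp tau] in
  (f ^+ r)%g k.

(* pi ⋈ sigma on {0,1} x S, with 0 = false, 1 = true:
   (0,k) |-> (1, sigma k), (1,k) |-> (0, pi k) *)
Definition bowtie (pi sigma : T -> T) (x : bool * T) : bool * T :=
  if x.1 then (false, pi x.2) else (true, sigma x.2).

Local Open Scope ring_scope.
Definition genus (S : {set T}) (sigma pi : T -> T) : rat :=
  ((#|S| + ncyc sigma S)%:R - (ncyc pi S)%:R
     - (ncyc (bowtie pi sigma) (setX [set: bool] S))%:R) / 2%:R.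

End Genus.

From mathcomp Require Import all_boot all_order all_fingroup all_algebra.
From mathcomp Require Import zify ring lra.
Import GRing.Theory Num.Theory.
Set Implicit Arguments. Unset Strict Implicit. Unset Printing Implicit Defensive.

(* Permutations are composed as in MathComp, (s * t) x = t (s x), and
   porbits counts cycles on the whole type.  For sigma, pi supported in S,
   the cycles of pi ⋈ sigma correspond to those of sigma * pi, so
   2 g(sigma, pi) = #|T| + #porbits sigma - #porbits pi - #porbits (sigma * pi).
   With f := sigma * tau, sigma \ tau is the first-return map of f outside
   {a, b}, i.e. f with a and then b cut out of their cycles, where
   skip s x := s * tperm x (s x) cuts x out.  As pi swaps a and b it commutes
   with tau, so sigma * pi = f * pi' where pi' := pi * tau = pi|_S' fixes a
   and b; cutting such a point out changes the cycle counts of f and of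
   f * pi' equally, and #porbits pi' = #porbits pi + 1.  Hence twice the genus
   difference is #porbits sigma + 1 - #porbits f, which is 2 when tau merges
   two cycles of sigma and 0 when it splits one. *)

Lemma card_imset_ker_le (U V W : finType) (h : U -> V) (h' : U -> W) (B : {set U}) :
  {in B &, forall x y, (h x == h y) = (h' x == h' y)} -> #|h' @: B| <= #|h @: B|.
Proof.
move=> hK; pose lift v := omap h' [pick x in B | h x == v].
have sub_lift : Some @: (h' @: B) \subset lift @: (h @: B).
  apply/subsetP=> _ /imsetP [_ /imsetP [x xB ->] ->].
  apply/imsetP; exists (h x); first exact: imset_f.
  rewrite /lift; case: pickP => [y /andP [yB /eqP hyx]|/(_ x)]; last by rewrite xB eqxx.
  by congr Some; apply/eqP; rewrite -hK // hyx.
rewrite -(card_imset _ (@Some_inj _)).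
exact: leq_trans (subset_leq_card sub_lift) (leq_imset_card _ _).
Qed.

Lemma card_imset_ker (U V W : finType) (h : U -> V) (h' : U -> W) (B : {set U}) :
  {in B &, forall x y, (h x == h y) = (h' x == h' y)} -> #|h @: B| = #|h' @: B|.
Proof.
move=> hK; apply/eqP; rewrite eqn_leq !card_imset_ker_le // => x y xB yB.
by rewrite hK.
Qed.

Lemma eq_cyc_of (U : finType) (f : U -> U) (B : {set U}) x y :
  injective f -> x \in B -> y \in B ->
  (cyc_of f B x == cyc_of f B y) = fconnect f x y.
Proof.
move=> injf xB yB; apply/eqP/idP => [cyc_xy | xy].
  have : y \in cyc_of f B y by rewrite inE yB connect0.
  by rewrite -cyc_xy inE => /andP [].
apply/setP => z; rewrite !inE; case: (z \in B) => //=.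
apply/idP/idP => [xz | yz]; last exact: connect_trans xy yz.
by apply: connect_trans xz; rewrite fconnect_sym.
Qed.

Lemma eq_ncyc (U : finType) (f g : U -> U) (A : {set U}) : f =1 g -> ncyc f A = ncyc g A.
Proof.
move=> fg; have cyc_fg : cyc_of f A =1 cyc_of g A.
  by move=> x; apply/setP => y; rewrite !inE (eq_fconnect fg).
by rewrite /ncyc (eq_imset _ cyc_fg).
Qed.

Lemma ncyc_transfer (U V : finType) (f : U -> U) (g : V -> V)
    (B : {set U}) (A : {set V}) (e : U -> V) :
  injective f -> injective g -> e @: B = A ->
  {in B &, forall x y, fconnect f x y = fconnect g (e x) (e y)} ->
  ncyc f B = ncyc g A.
Proof.
move=> injf injg eBA eK; rewrite /ncyc -eBA -imset_comp.
apply: card_imset_ker => x y xB yB /=.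
by rewrite eq_cyc_of // eq_cyc_of ?imset_f // eK.
Qed.

Section PermCycles.
Variable T : finType.
Implicit Types (s p : {perm T}) (A : {set T}).

Lemma porbitE s x y : (y \in porbit s x) = fconnect s x y.
Proof.
apply/porbitP/idP => [[i ->] | xy]; first by rewrite permX fconnect_iter.
by exists (findex s x y); rewrite permX iter_findex.
Qed.

Lemma cyc_of_perm_on A s x : perm_on A s -> x \in A -> cyc_of s A x = porbit s x.
Proof.
move=> sA xA; apply/setP => y; rewrite inE porbitE andb_idl // => /iter_findex <-.
by elim: findex => //= n IHn; rewrite perm_closed.
Qed.

Lemma ncyc_perm_on A s : perm_on A s -> ncyc s A + #|~: A| = #|porbits s|.
Proof.
move=> sA; have porbit_in x : x \in A -> porbit s x \subset A.
  by move=> xA; rewrite -(cyc_of_perm_on sA xA); apply/subsetP => y /setIdP [].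
have porbit_out x : x \in ~: A -> porbit s x = [set x].
  rewrite inE => xA; apply/setP => y; rewrite inE porbitE.
  apply/idP/eqP => [/iter_findex <- | ->]; last exact: connect0.
  by rewrite iter_fix // (out_perm sA).
have -> : porbits s = porbit s @: A :|: porbit s @: ~: A.
  rewrite -imsetU setUCr; apply/setP => X.
  by apply/imsetP/imsetP => -[x _ ->]; exists x.
rewrite cardsU (_ : _ :&: _ = set0) ?cards0 ?subn0.
  rewrite /ncyc (eq_in_imset (fun x => cyc_of_perm_on sA)).
  by rewrite (eq_in_imset porbit_out) (card_imset _ set1_inj).
apply/setP => X; rewrite !inE; apply/andP => -[/imsetP [x xA ->] /imsetP [y yA]].
move/eqP; rewrite eq_sym eq_porbit_mem => yx.
by move: yA; rewrite inE (subsetP (porbit_in x xA) y yx).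
Qed.

Lemma ncyc_bowtie A p s : perm_on A p ->
  ncyc (bowtie p s) (setX [set: bool] A) = ncyc (s * p)%g A.
Proof.
move=> pA; set bw := bowtie p s.
have inj_bw : injective bw.
  by move=> [[] x] [[] y]; rewrite /bw /bowtie /= => -[] // /perm_inj ->.
pose e (u : bool * T) := if u.1 then p u.2 else u.2.
apply: (ncyc_transfer (e := e) inj_bw perm_inj).
  apply/setP => z; apply/imsetP/idP => [[[[] x]] | zA]; last by exists (false, z); rewrite ?inE.
    by rewrite !inE /e /= => xA ->; rewrite perm_closed.
  by rewrite !inE /e /= => xA ->.
have iter_bw n x : iter n.*2 bw (false, x) = (false, iter n (s * p)%g x).
  by elim: n => // n IHn; rewrite doubleS /= IHn /bw /bowtie /= permM.
have fconnect_bw x y : fconnect bw (false, x) (false, y) = fconnect (s * p)%g x y.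
  apply/idP/idP => [/iter_findex | /iter_findex <-]; last by rewrite -iter_bw fconnect_iter.
  rewrite -(odd_double_half (findex _ _ _)).
  by case: odd; rewrite ?add1n ?add0n /= iter_bw // => -[<-]; apply: fconnect_iter.
have to_false u : fconnect bw u (false, e u).
  by case: u => [[] x]; [apply: fconnect1 | apply: connect0].
have sym_bw : connect_sym (frel bw) by move=> x y; apply: fconnect_sym.
move=> u v _ _.
by rewrite (same_connect sym_bw (to_false u)) (same_connect_r sym_bw (to_false v)).
Qed.

Lemma card_porbits_mulr_tperm s x y :
  #|porbits (s * tperm x y)| + (~~ fconnect s x y).*2 = #|porbits s| + (x != y).
Proof.
rewrite -porbitsV invMg tpermV -(porbitsV s) -porbits_mul_tperm porbitV porbitE.
by rewrite fconnect_sym //; apply: perm_inj.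
Qed.

Lemma supp_tperm (x y : T) : x != y -> supp (tperm x y) = [set x; y].
Proof.
move=> neq_xy; apply/setP => z; rewrite !inE.
case: tpermP => [-> | -> | /eqP/negbTE -> /eqP/negbTE ->]; rewrite eqxx //.
- by rewrite (eq_sym y) neq_xy.
- by rewrite orbT neq_xy.
Qed.

Lemma perm_on_tperm A x y : x \in A -> y \in A -> perm_on A (tperm x y).
Proof.
by move=> xA yA; apply: subset_trans (tperm_on x y) _; apply/subsetP => z /set2P [] ->.
Qed.

Lemma perm_on_setD A (B : {set T}) s :
  perm_on A s -> {in B, forall x, s x = x} -> perm_on (A :\: B) s.
Proof.
move=> sA sB; apply/subsetP => x sx; rewrite !inE (subsetP sA x sx) andbT.
by apply: contraTN sx => /sB sxx; rewrite inE sxx eqxx.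
Qed.

Local Open Scope ring_scope.

Lemma genusE S s p : perm_on S s -> perm_on S p ->
  genus S s p =
  ((#|T| + #|porbits s|)%:R - #|porbits p|%:R - #|porbits (s * p)%g|%:R) / 2%:R.
Proof.
move=> sS pS; rewrite /genus ncyc_bowtie // -(cardsC S).
rewrite -(ncyc_perm_on sS) -(ncyc_perm_on pS) -(ncyc_perm_on (perm_onM sS pS)) !natrD.
by congr (_ / _); ring.
Qed.

Lemma eq_genus S (f f' p p' : T -> T) :
  f =1 f' -> p =1 p' -> genus S f p = genus S f' p'.
Proof.
move=> ff' pp'; have bow : bowtie p f =1 bowtie p' f'.
  by move=> [[] x]; rewrite /bowtie /= ?ff' ?pp'.
by rewrite /genus (eq_ncyc _ ff') (eq_ncyc _ pp') (eq_ncyc _ bow).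
Qed.

End PermCycles.

Lemma head_filter_iota (P : pred nat) n r :
  0 < r <= n -> P r -> (forall j, 0 < j < r -> ~~ P j) ->
  head 0 [seq j <- iota 1 n | P j] = r.
Proof.
case/andP=> r_gt0 r_le_n Pr notP.
have -> : n = r.-1 + (n - r).+1 by lia.
rewrite iotaD filter_cat (@eq_in_filter _ _ pred0) ?filter_pred0; last first.
  by move=> j; rewrite mem_iota => j_lt; apply/negbTE/notP; lia.
by rewrite add1n prednK //= Pr.
Qed.

Section Skip.
Variable T : finType.
Implicit Types (s p : {perm T}) (A : {set T}).

Definition skip s x := (s * tperm x (s x))%g.

Lemma skip_id s x : skip s x x = x.
Proof. by rewrite permM tpermR. Qed.

Lemma skipE s x k : k != x -> skip s x k = if s k == x then s x else s k.
Proof.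
move=> kx; rewrite permM; case: tpermP => [-> | /perm_inj kx' | /eqP/negbTE -> _].
- by rewrite eqxx.
- by rewrite kx' eqxx in kx.
- by [].
Qed.

Lemma perm_on_skip A s x : perm_on A s -> x \in A -> perm_on A (skip s x).
Proof. by move=> sA xA; rewrite perm_onM ?perm_on_tperm ?perm_closed. Qed.

Lemma skipMr s p x : p x = x -> skip (s * p) x = (skip s x * p)%g.
Proof. by move=> px; rewrite /skip permM -{1}px -tpermJ conjgE !mulgA mulgK. Qed.

Lemma card_porbits_skip s x : #|porbits (skip s x)| = #|porbits s| + (x != s x).
Proof. by have := card_porbits_mulr_tperm s x (s x); rewrite fconnect1 addn0. Qed.

Lemma card_porbits_skip_mulr s p x : p x = x ->
  #|porbits (skip s x)| + #|porbits (s * p)%g| = #|porbits s| + #|porbits (skip s x * p)%g|.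
Proof.
move=> px; rewrite -skipMr // !card_porbits_skip permM -{3}px (inj_eq perm_inj).
by rewrite addnAC addnA.
Qed.

Lemma card_porbits_skip2_mulr s p x y : p x = x -> p y = y ->
  #|porbits (skip (skip s x) y)| + #|porbits (s * p)%g| =
  #|porbits s| + #|porbits (skip (skip s x) y * p)%g|.
Proof.
move=> px py; have := card_porbits_skip_mulr (skip s x) py.
have := card_porbits_skip_mulr s px; lia.
Qed.

End Skip.

Section MinusTperm.
Variables (T : finType) (sigma : {perm T}) (a b : T).
Hypothesis neq_ab : a != b.
Let f := (sigma * tperm a b)%g.

Lemma minus_tperm_first_exit k r :
  k \notin [set a; b] -> 0 < r <= #|T| -> iter r f k \notin [set a; b] ->
  all (fun j => iter j f k \in [set a; b]) (iota 1 r.-1) ->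
  minus sigma (tperm a b) k = iter r f k.
Proof.
move=> kD r_range exit /allP inside; rewrite /minus supp_tperm // (negbTE kD) -/f permX.
rewrite (@head_filter_iota _ _ r) ?permX // => j j_range; rewrite permX negbK.
by apply: inside; rewrite mem_iota; lia.
Qed.

Lemma skip2_id : {in [set a; b], forall x, skip (skip f a) b x = x}.
Proof.
move=> x /set2P [] ->; last exact: skip_id.
by rewrite skipE // skip_id (negbTE neq_ab).
Qed.

Lemma minus_tperm_notin k :
  k \notin [set a; b] -> minus sigma (tperm a b) k = skip (skip f a) b k.
Proof.
move=> kD; move: (kD); rewrite in_set2 negb_or => /andP [ka kb].
have card_T : 3 <= #|T|.
  have uniq_kab : uniq [:: k; a; b] by rewrite /= !inE negb_or ka kb neq_ab.
  by rewrite -[3]/(size [:: k; a; b]) -(card_uniqP uniq_kab) max_card.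
have exit r : 0 < r <= 3 -> iter r f k \notin [set a; b] ->
    all (fun j => iter j f k \in [set a; b]) (iota 1 r.-1) ->
    minus sigma (tperm a b) k = iter r f k.
  by move=> r_range; apply: minus_tperm_first_exit => //; lia.
have finj : injective f := @perm_inj _ f.
rewrite skipE // skipE // skipE; last by rewrite eq_sym.
case: (f k =P a) => [fk_a | /eqP fk_a].
  have fa_a : f a != a by rewrite -{2}fk_a (inj_eq finj) eq_sym.
  case: (f a =P b) => [fa_b | /eqP fa_b].
    have fb_a : f b != a by rewrite -fk_a (inj_eq finj) eq_sym.
    have fb_b : f b != b by rewrite -{2}fa_b (inj_eq finj) eq_sym.
    rewrite (negbTE fb_a) (exit 3) //=; rewrite ?fk_a ?fa_b ?inE ?eqxx ?orbT //.
    by rewrite (negbTE fb_a) (negbTE fb_b).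
  rewrite (exit 2) //=; rewrite ?fk_a ?inE ?eqxx ?orbT //.
  by rewrite (negbTE fa_a) (negbTE fa_b).
case: (f k =P b) => [fk_b | /eqP fk_b]; last first.
  by rewrite (exit 1) //= in_set2 (negbTE fk_a) (negbTE fk_b).
have fb_b : f b != b by rewrite -{2}fk_b (inj_eq finj) eq_sym.
case: (f b =P a) => [fb_a | /eqP fb_a].
  have fa_a : f a != a by rewrite -{2}fb_a (inj_eq finj).
  have fa_b : f a != b by rewrite -fk_b (inj_eq finj) eq_sym.
  rewrite (exit 3) //=; rewrite ?fk_b ?fb_a ?inE ?eqxx ?orbT //.
  by rewrite (negbTE fa_a) (negbTE fa_b).
rewrite (exit 2) //=; rewrite ?fk_b ?inE ?eqxx ?orbT //.
by rewrite (negbTE fb_a) (negbTE fb_b).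
Qed.

Lemma minus_tpermE : minus sigma (tperm a b) =1 skip (skip f a) b.
Proof.
move=> k; have [kD | kD] := boolP (k \in [set a; b]); last exact: minus_tperm_notin.
by rewrite skip2_id // /minus supp_tperm // kD.
Qed.

Lemma perm_on_skip2 S : perm_on S sigma -> a \in S -> b \in S ->
  perm_on (S :\: [set a; b]) (skip (skip f a) b).
Proof.
move=> sS aS bS; apply: perm_on_setD skip2_id.
by do 2 apply: perm_on_skip => //; rewrite perm_onM ?perm_on_tperm.
Qed.

End MinusTperm.

Section TwoCycle.
Variables (T : finType) (S : {set T}) (sigma pi : {perm T}) (a b : T).
Hypotheses (pS : perm_on S pi) (neq_ab : a != b) (pab : pi a = b) (pba : pi b = a).

Lemma skip_two_cycle_id : {in [set a; b], forall x, skip pi a x = x}.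
Proof.
move=> x /set2P [] ->; first exact: skip_id.
by rewrite skipE 1?eq_sym // pba eqxx pab.
Qed.

Lemma perm_on_skip_two_cycle : perm_on (S :\: [set a; b]) (skip pi a).
Proof.
apply: perm_on_setD skip_two_cycle_id; apply: perm_on_skip => //.
by apply: (subsetP pS); rewrite inE pab eq_sym.
Qed.

Lemma restr_two_cycle : restr pi (S :\: [set a; b]) =1 skip pi a.
Proof.
move=> x; rewrite /restr inE; have [xD | xD] /= := boolP (x \in [set a; b]).
  by rewrite skip_two_cycle_id.
have [xa xb] : x != a /\ x != b by apply/norP; rewrite -in_set2.
rewrite skipE // -pba (inj_eq perm_inj) (negbTE xb).
by case: ifP => // /negbT xS; rewrite (out_perm pS xS).
Qed.

Lemma mul_two_cycle : (sigma * pi = sigma * tperm a b * skip pi a)%g.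
Proof.
have tperm_pi : (tperm a b * pi = pi * tperm a b)%g.
  by rewrite conjgC tpermJ pab pba tpermC.
by rewrite /skip pab -mulgA (mulgA (tperm a b)) tperm_pi -mulgA tperm2 mulg1.
Qed.

End TwoCycle.

Local Open Scope ring_scope.

Theorem lemma3p17 (T : finType) (S : {set T}) (sigma pi : {perm T})
  (a b : T) :
  perm_on S sigma -> perm_on S pi ->
  a != b -> pi a = b -> pi b = a ->
  let tau := tperm a b in
  let S' := S :\: supp tau in
  genus S sigma pi - genus S' (minus sigma tau) (restr pi S')
  = (if ~~ fconnect sigma a b then 1 else 0).
Proof.
move=> sS pS neq_ab pab pba tau S'.
have aS : a \in S by apply: (subsetP pS); rewrite inE pab eq_sym.
have bS : b \in S by apply: (subsetP pS); rewrite inE pba.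
pose f := (sigma * tau)%g; pose h := skip (skip f a) b; pose pi' := skip pi a.
rewrite /S' supp_tperm //.
rewrite (eq_genus _ (minus_tpermE sigma neq_ab) (restr_two_cycle pS neq_ab pab pba)).
rewrite !genusE ?perm_on_skip2 ?perm_on_skip_two_cycle //.
rewrite (mul_two_cycle sigma pab pba) -/tau -/f -/h -/pi'.
have [pi'_a pi'_b] : pi' a = a /\ pi' b = b.
  by split; apply: (skip_two_cycle_id neq_ab pab pba); rewrite !inE eqxx ?orbT.
have card_pi' : #|porbits pi'| = (#|porbits pi| + 1)%N.
  by rewrite card_porbits_skip pab neq_ab.
have := card_porbits_skip2_mulr f pi'_a pi'_b.
have := card_porbits_mulr_tperm sigma a b.
rewrite card_pi' neq_ab -mul2n.
move=> /(congr1 (fun n => n%:R : rat)) + /(congr1 (fun n => n%:R : rat)).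
rewrite !natrD.
by case: (fconnect sigma a b) => /= card_f card_h; lra.
Qed.
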